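(* Let $\omega\colon\mathbf Z_+\to(0,+\infty)$ be a positive weight and let $f(z)=\sum_{k\ge3}c_kz^k\in\mathcal X_\omega$ be such that for every $n\ge0$ and every $m\ge1$, \[\frac{c_{(6m+4)2^n}}{\omega((6m+4)2^n)}=\frac{c_{(2m+1)2^n}}{\omega((2m+1)2^n)}\quad\text{and}\quad c_{2^{n+2}}=0.\] Then for every $k\ge3$ with $k\notin\{2^i;\ i\ge2\}$ there exist integer sequences $(m_n)_{n\ge1}$, $(p_n)_{n\ge1}$, $(j_n)_{n\ge1}$ (depending on $k$) such that: (i) $c_k=\big(\omega((2m_1+1)2^{p_1})/\omega((6m_n+4)2^{p_n})\big)\,c_{(6m_n+4)2^{p_n}}$ for every $n\ge1$; (ii) $m_n\ge1$ for every $n\ge1$; (iii) $3m_n+2=T^{j_n}(k)$ for every $n\ge1$; (iv) for every $n\ge1$, $j_{n+1}>j_n$ if and only if $3m_n+2\notin\{2^i;\ i\ge2\}$; (v) $(j_n)_{n\ge1}$ and $((6m_n+4)2^{p_n})_{n\ge1}$ are either both strictly increasing or both stationary.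
   Context: $T\colon\mathbf Z_+\to\mathbf Z_+$ is the modified Collatz map: $T(n)=n/2$ for $n$ even, $T(n)=(3n+1)/2$ for $n$ odd. $\mathcal X_\omega$ is the Hilbert space of holomorphic functions $f(z)=\sum_{n\ge3}c_nz^n$ on the unit disk with $\|f\|_\omega^2=\sum_{n\ge3}|c_n|^2/\omega(n)<\infty$. *)

From Stdlib Require Import Reals Arith.
From Coquelicot Require Import Coquelicot.
Open Scope R_scope.

Definition T (n : nat) : nat :=
  if Nat.even n then Nat.div n 2 else Nat.div (3 * n + 1) 2.

Definition Titer (j : nat) (k : nat) : nat := Nat.iter j T k.

Definition pow2_ge4 (x : nat) : Prop := exists i : nat, (2 <= i)%nat /\ x = (2 ^ i)%nat.

(* A positive weight on Z_+ = {1,2,...} (value at 0 irrelevant). *)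
Definition pos_weight (w : nat -> R) : Prop := forall n : nat, (1 <= n)%nat -> 0 < w n.

(* f(z) = sum_{n>=3} c_n z^n belongs to X_omega:
   the coefficients vanish below 3, the power series converges on the open
   unit disk (f holomorphic there), and sum |c_n|^2 / w(n) < oo. *)
Definition in_X (w : nat -> R) (c : nat -> C) : Prop :=
  (forall n : nat, (n < 3)%nat -> c n = 0%C) /\
  (forall z : C, Cmod z < 1 -> ex_series (fun n : nat => (c n * pow_n z n)%C)) /\
  ex_series (fun n : nat => if (3 <=? n)%nat then (Cmod (c n)) ^ 2 / w n else 0).

From Stdlib Require Import Reals Arith Lia Classical.
From Coquelicot Require Import Coquelicot.

(* Write k = (2m+1) 2^e with m >= 1, possible as k is not a power of two;
   then T^(e+1) k = 3m+2.  Repeating this at 3m+2, the times j_n are those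
   just after the orbit of k passes an odd number, and they freeze once the
   orbit reaches a power of two.  At each passage the index 2^j T^j(k) goes
   from (2m+1) 2^(j+e) to (6m+4) 2^(j+e), so by hypothesis c/w takes the
   same value at all these indices as at k = 2^0 T^0(k). *)

Lemma Cdiv_eq_scale (a b : C) (u v : R) : u <> 0 -> v <> 0 ->
  (a / RtoC u = b / RtoC v)%C -> a = (RtoC (u / v) * b)%C.
Proof.
  intros Hu Hv H.
  assert (Hu' : RtoC u <> 0%C) by (intro E; apply Hu; now injection E).
  assert (Hv' : RtoC v <> 0%C) by (intro E; apply Hv; now injection E).
  rewrite RtoC_div by exact Hv.
  replace a with (a / RtoC u * RtoC u)%C by (field; exact Hu').
  rewrite H. field. exact Hv'.
Qed.

Local Open Scope nat_scope.

Lemma T_double (y : nat) : T (2 * y) = y.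
Proof.
  unfold T. rewrite Nat.even_mul. simpl Nat.even.
  rewrite Nat.mul_comm, Nat.div_mul; auto.
Qed.

Lemma T_odd (m : nat) : T (2 * m + 1) = 3 * m + 2.
Proof.
  unfold T. rewrite Nat.even_add, Nat.even_mul. simpl Nat.even.
  replace (3 * (2 * m + 1) + 1) with ((3 * m + 2) * 2) by lia.
  apply Nat.div_mul; auto.
Qed.

Lemma T_pos (n : nat) : 0 < n -> 0 < T n.
Proof.
  intro Hn. unfold T. destruct (Nat.even n) eqn:E.
  - apply Nat.div_str_pos. apply Nat.even_spec in E as [h ->]. lia.
  - apply Nat.div_str_pos. lia.
Qed.

Lemma Titer_pos (j k : nat) : 0 < k -> 0 < Titer j k.
Proof.
  intro Hk. unfold Titer. induction j as [|j IH]; [exact Hk|].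
  rewrite Nat.iter_succ. now apply T_pos.
Qed.

Lemma Titer_mul_pow2 (e o : nat) : Titer e (o * 2 ^ e) = o.
Proof.
  unfold Titer. induction e as [|e IH]; [simpl; lia|].
  rewrite Nat.iter_succ_r, Nat.pow_succ_r'.
  replace (o * (2 * 2 ^ e)) with (2 * (o * 2 ^ e)) by lia.
  now rewrite T_double.
Qed.

Lemma Titer_add (i j x : nat) : Titer (i + j) x = Titer i (Titer j x).
Proof. apply Nat.iter_add. Qed.

Fixpoint val2_fuel (fuel n : nat) : nat :=
  match fuel with
  | O => O
  | S fuel' => if Nat.even n then S (val2_fuel fuel' (Nat.div2 n)) else O
  end.

(* The 2-adic valuation: n halvings are enough fuel for n. *)
Definition val2 (n : nat) : nat := val2_fuel n n.

Lemma val2_fuel_spec (fuel n : nat) :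
  0 < n <= fuel -> exists m, n = (2 * m + 1) * 2 ^ val2_fuel fuel n.
Proof.
  revert n. induction fuel as [|fuel IH]; intros n Hn; [lia|].
  simpl. pose proof (Nat.div2_odd n) as Hn2. unfold Nat.odd in Hn2.
  destruct (Nat.even n); cbn [negb Nat.b2n] in Hn2.
  - destruct (IH (Nat.div2 n)) as [m Hm]; [lia|].
    exists m. rewrite Nat.pow_succ_r'. nia.
  - exists (Nat.div2 n). rewrite Nat.pow_0_r. lia.
Qed.

Lemma val2_spec (n : nat) : 0 < n -> exists m, n = (2 * m + 1) * 2 ^ val2 n.
Proof. intro Hn. apply val2_fuel_spec. lia. Qed.

Lemma odd_mul_pow2_inj (m m' e e' : nat) :
  (2 * m + 1) * 2 ^ e = (2 * m' + 1) * 2 ^ e' -> m = m' /\ e = e'.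
Proof.
  revert e'. induction e as [|e IH]; intros [|e'] H;
    rewrite ?Nat.pow_0_r, ?Nat.pow_succ_r' in H.
  - lia.
  - exfalso. lia.
  - exfalso. lia.
  - destruct (IH e') as [-> ->]; [lia|auto].
Qed.

Lemma eq_pow2_val2 (x : nat) : 3 <= x -> x = 2 ^ val2 x <-> pow2_ge4 x.
Proof.
  intro Hx. split.
  - intro Hpow. exists (val2 x). split; [|exact Hpow].
    destruct (val2 x) as [|[|e]]; simpl in Hpow; lia.
  - intros [i [_ ->]]. destruct (val2_spec (2 ^ i)) as [m Hm].
    + apply Nat.neq_0_lt_0, Nat.pow_nonzero. lia.
    + rewrite <- (Nat.mul_1_l (2 ^ i)) in Hm at 1.
      destruct (odd_mul_pow2_inj 0 m i (val2 (2 ^ i))) as [_ <-]; lia.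
Qed.

Lemma iter_inflationary_dichotomy (s : nat -> nat) (a N : nat) :
  (forall x, x <= s x) ->
  (forall n, N <= n -> Nat.iter n s a < Nat.iter (S n) s a) \/
  (exists n0, N <= n0 /\
     forall n, n0 <= n -> Nat.iter n s a = Nat.iter n0 s a).
Proof.
  intro Hs.
  destruct (classic (exists n0, N <= n0 /\ s (Nat.iter n0 s a) = Nat.iter n0 s a))
    as [[n0 [Hn0 Hfix]]|Hnofix].
  - right. exists n0. split; [exact Hn0|].
    intros n Hn. induction Hn as [|n _ IH]; [reflexivity|].
    now rewrite Nat.iter_succ, IH.
  - left. intros n Hn. rewrite Nat.iter_succ.
    specialize (Hs (Nat.iter n s a)).
    assert (s (Nat.iter n s a) <> Nat.iter n s a) by (intro; apply Hnofix; eauto).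
    lia.
Qed.

Section Orbit.

Variable k : nat.

Definition next_j (j : nat) : nat :=
  let x := Titer j k in
  if x =? 2 ^ val2 x then j else j + S (val2 x).

Definition j_at (n : nat) : nat := Nat.iter n next_j O.

Definition m_at (n : nat) : nat := Titer (j_at n) k / 3.

(* With p = j - 1 and T^j k = 3m+2 this is the index (6m+4) 2^p of the statement. *)
Definition coef_index (j : nat) : nat := 2 ^ j * Titer j k.

Lemma le_next_j (j : nat) : j <= next_j j.
Proof. unfold next_j. destruct (_ =? _); lia. Qed.

Lemma lt_next_j (j : nat) :
  j < next_j j <-> Titer j k <> 2 ^ val2 (Titer j k).
Proof.
  unfold next_j.
  destruct (Nat.eqb_spec (Titer j k) (2 ^ val2 (Titer j k))) as [Heq | Hneq].
  - split; [lia | contradiction].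
  - split; [intros _; exact Hneq | lia].
Qed.

Lemma j_at_dichotomy :
  (forall n, 1 <= n -> j_at n < j_at (S n)) \/
  (exists n0, 1 <= n0 /\ forall n, n0 <= n -> j_at n = j_at n0).
Proof. exact (iter_inflationary_dichotomy next_j 0 1 le_next_j). Qed.

Hypothesis k_ge3 : 3 <= k.

Lemma coef_index_pos (j : nat) : 0 < coef_index j.
Proof.
  unfold coef_index. apply Nat.mul_pos_pos.
  - apply Nat.neq_0_lt_0, Nat.pow_nonzero. lia.
  - apply Titer_pos. lia.
Qed.

Lemma next_j_jump (j : nat) :
  Titer j k <> 2 ^ val2 (Titer j k) ->
  exists m e, 1 <= m /\ Titer j k = (2 * m + 1) * 2 ^ e /\
    next_j j = j + S e /\ Titer (next_j j) k = 3 * m + 2.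
Proof.
  intro Hnot. destruct (val2_spec (Titer j k)) as [m Hm]; [apply Titer_pos; lia|].
  assert (Hm1 : 1 <= m) by (destruct m; [simpl in Hm; lia | lia]).
  exists m, (val2 (Titer j k)). split; [exact Hm1|]. split; [exact Hm|].
  unfold next_j. apply Nat.eqb_neq in Hnot. rewrite Hnot.
  split; [reflexivity|].
  rewrite Nat.add_comm, Titer_add. unfold Titer at 1.
  rewrite Nat.iter_succ. fold (Titer (val2 (Titer j k)) (Titer j k)).
  now rewrite Hm at 2; rewrite Titer_mul_pow2, T_odd.
Qed.

Lemma coef_index_next_j (j : nat) : j < next_j j ->
  exists m e, 1 <= m /\ coef_index j = (2 * m + 1) * 2 ^ (j + e) /\
    coef_index (next_j j) = (6 * m + 4) * 2 ^ (j + e).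
Proof.
  intro Hlt. apply lt_next_j in Hlt.
  destruct (next_j_jump j Hlt) as (m & e & Hm1 & Hx & Hnext & Hy).
  exists m, e. split; [exact Hm1|]. unfold coef_index.
  rewrite Hy, Hx, Hnext, !Nat.pow_add_r, Nat.pow_succ_r'. split; ring.
Qed.

Lemma coef_index_lt_next_j (j : nat) : j < next_j j ->
  coef_index j < coef_index (next_j j).
Proof.
  intro Hlt. destruct (coef_index_next_j j Hlt) as (m & e & _ & -> & ->).
  apply Nat.mul_lt_mono_pos_r; [|lia].
  apply Nat.neq_0_lt_0, Nat.pow_nonzero. lia.
Qed.

Hypothesis k_not_pow2 : ~ pow2_ge4 k.

Lemma j_at_one : exists m e, 1 <= m /\ k = (2 * m + 1) * 2 ^ e /\
  j_at 1 = S e /\ Titer (j_at 1) k = 3 * m + 2.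
Proof.
  assert (Hk : Titer 0 k <> 2 ^ val2 (Titer 0 k))
    by (intro H; apply k_not_pow2, eq_pow2_val2; auto).
  exact (next_j_jump 0 Hk).
Qed.

Lemma orbit_at_j_at (n : nat) : 1 <= n ->
  1 <= j_at n /\ exists m, 1 <= m /\ Titer (j_at n) k = 3 * m + 2.
Proof.
  intro Hn. induction Hn as [|n _ [Hpos [m [Hm1 Hx]]]].
  - destruct j_at_one as (m & e & Hm1 & _ & -> & Hy). split; [lia | eauto].
  - change (j_at (S n)) with (next_j (j_at n)).
    destruct (proj1 (Nat.lt_eq_cases _ _) (le_next_j (j_at n))) as [Hlt | <-].
    + apply lt_next_j, next_j_jump in Hlt as (m' & e & Hm1' & _ & -> & Hy).
      split; [lia | eauto].
    + eauto.
Qed.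

Lemma m_at_spec (n : nat) : 1 <= n ->
  1 <= m_at n /\ Titer (j_at n) k = 3 * m_at n + 2 /\
  coef_index (j_at n) = (6 * m_at n + 4) * 2 ^ pred (j_at n).
Proof.
  intro Hn. destruct (orbit_at_j_at n Hn) as [Hpos [m [Hm1 Hx]]].
  assert (Hm : m_at n = m)
    by (unfold m_at; rewrite Hx; symmetry; apply (Nat.div_unique _ _ _ 2); lia).
  rewrite Hm. split; [exact Hm1|]. split; [exact Hx|].
  unfold coef_index. rewrite Hx. destruct (j_at n) as [|j]; [lia|].
  rewrite Nat.pow_succ_r'. simpl pred. ring.
Qed.

Lemma m_at_one : (2 * m_at 1 + 1) * 2 ^ pred (j_at 1) = k.
Proof.
  destruct j_at_one as (m & e & Hm1 & Hk & Hj & Hy).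
  assert (Hm : m_at 1 = m)
    by (unfold m_at; rewrite Hy; symmetry; apply (Nat.div_unique _ _ _ 2); lia).
  now rewrite Hm, Hj.
Qed.

Lemma lt_j_at_succ (n : nat) : 1 <= n ->
  j_at n < j_at (S n) <-> ~ pow2_ge4 (3 * m_at n + 2).
Proof.
  intro Hn. destruct (m_at_spec n Hn) as (Hm1 & Hx & _). rewrite <- Hx.
  change (j_at (S n)) with (next_j (j_at n)).
  rewrite lt_next_j. apply not_iff_compat, eq_pow2_val2. lia.
Qed.

Section Coefficients.

Variables (c : nat -> C) (w : nat -> R).

Hypothesis w_pos : pos_weight w.

Let ratio (i : nat) : C := (c i / RtoC (w i))%C.

Hypothesis ratio_6m4 : forall n m : nat, 1 <= m ->
  ratio ((6 * m + 4) * 2 ^ n) = ratio ((2 * m + 1) * 2 ^ n).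

Lemma ratio_coef_index_j_at (n : nat) : ratio (coef_index (j_at n)) = ratio k.
Proof.
  induction n as [|n IH].
  - unfold coef_index. simpl. now rewrite Nat.add_0_r.
  - change (j_at (S n)) with (next_j (j_at n)).
    destruct (proj1 (Nat.lt_eq_cases _ _) (le_next_j (j_at n))) as [Hlt | <-];
      [|exact IH].
    destruct (coef_index_next_j _ Hlt) as (m & e & Hm1 & Hi & Hi').
    rewrite Hi', ratio_6m4, <- Hi by exact Hm1. exact IH.
Qed.

Lemma coef_k_scale (n : nat) :
  c k = (RtoC (w k / w (coef_index (j_at n))) * c (coef_index (j_at n)))%C.
Proof.
  apply Cdiv_eq_scale.
  - apply Rgt_not_eq, w_pos. lia.
  - apply Rgt_not_eq, w_pos, coef_index_pos.
  - symmetry. apply ratio_coef_index_j_at.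
Qed.

End Coefficients.

End Orbit.

Local Open Scope R_scope.

Theorem lemma2p5 (w : nat -> R) (c : nat -> C) :
  pos_weight w ->
  in_X w c ->
  (forall n m : nat, (1 <= m)%nat ->
     (c ((6 * m + 4) * 2 ^ n)%nat / RtoC (w ((6 * m + 4) * 2 ^ n)%nat))%C
     = (c ((2 * m + 1) * 2 ^ n)%nat / RtoC (w ((2 * m + 1) * 2 ^ n)%nat))%C
     /\ c (2 ^ (n + 2))%nat = 0%C) ->
  forall k : nat, (3 <= k)%nat -> ~ pow2_ge4 k ->
  exists (m p j : nat -> nat),
    (forall n : nat, (1 <= n)%nat ->
       c k = (RtoC (w ((2 * m 1%nat + 1) * 2 ^ p 1%nat)%nat
                    / w ((6 * m n + 4) * 2 ^ p n)%nat)
              * c ((6 * m n + 4) * 2 ^ p n)%nat)%C) /\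
    (forall n : nat, (1 <= n)%nat -> (1 <= m n)%nat) /\
    (forall n : nat, (1 <= n)%nat -> (3 * m n + 2)%nat = Titer (j n) k) /\
    (forall n : nat, (1 <= n)%nat ->
       ((j n < j (S n))%nat <-> ~ pow2_ge4 (3 * m n + 2)%nat)) /\
    (((forall n : nat, (1 <= n)%nat -> (j n < j (S n))%nat) /\
      (forall n : nat, (1 <= n)%nat ->
         ((6 * m n + 4) * 2 ^ p n < (6 * m (S n) + 4) * 2 ^ p (S n))%nat))
     \/
     ((exists n0 : nat, (1 <= n0)%nat /\
         forall n : nat, (n0 <= n)%nat -> j n = j n0) /\
      (exists n0 : nat, (1 <= n0)%nat /\
         forall n : nat, (n0 <= n)%nat ->
           ((6 * m n + 4) * 2 ^ p n)%nat = ((6 * m n0 + 4) * 2 ^ p n0)%nat))).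
Proof.
  intros Hw _ Hc k Hk Hnot_pow2.
  pose proof (fun n m Hm => proj1 (Hc n m Hm)) as Hratio.
  pose proof (m_at_spec k Hk Hnot_pow2) as Hspec.
  exists (m_at k), (fun n => pred (j_at k n)), (j_at k).
  split; [|split; [|split; [|split]]].
  - intros n Hn. destruct (Hspec n Hn) as (_ & _ & <-).
    rewrite m_at_one by assumption. exact (coef_k_scale k Hk c w Hw Hratio n).
  - intros n Hn. apply (Hspec n Hn).
  - intros n Hn. symmetry. apply (Hspec n Hn).
  - exact (lt_j_at_succ k Hk Hnot_pow2).
  - destruct (j_at_dichotomy k) as [Hinc | [n0 [Hn0 Hconst]]]; [left | right].
    + split; [exact Hinc|]. intros n Hn.
      destruct (Hspec n Hn) as (_ & _ & <-).
      destruct (Hspec (S n) ltac:(lia)) as (_ & _ & <-).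
      exact (coef_index_lt_next_j k Hk _ (Hinc n Hn)).
    + split; exists n0; split; try exact Hn0; intros n Hn; [exact (Hconst n Hn)|].
      destruct (Hspec n ltac:(lia)) as (_ & _ & <-).
      destruct (Hspec n0 Hn0) as (_ & _ & <-).
      now rewrite (Hconst n Hn).
Qed.
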